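(* Let $K\ge 2$, let $\mathcal{D}$ be a probability distribution on $\mathcal{X}\times\mathcal{Y}$ with $\mathcal{Y}=\{1,\dots,K\}$, and let $\rho$ be a probability distribution over classifiers $h:\mathcal{X}\to\mathcal{Y}$. Let $W_\rho(X,Y)=\mathbb{E}_{h\sim\rho}[\mathbb{1}(h(X)\neq Y)]$ for $(X,Y)\sim\mathcal{D}$. Suppose $\rho$ is competent, i.e. for every $0\le t\le 1/2$, $$\mathbb{P}_{\mathcal{D}}\big(W_\rho\in[t,1/2)\big)\;\ge\;\mathbb{P}_{\mathcal{D}}\big(W_\rho\in[1/2,1-t]\big).$$ Suppose $\mathbb{E}_{h\sim\rho}[L(h)]\neq 0$. Then the ensemble improvement rate satisfies $\mathrm{EIR}\ge 0$, i.e. $L(h_{\mathrm{MV}})\le \mathbb{E}_{h\sim\rho}[L(h)]$.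
   Context: The error rate of a classifier is $L(h)=\mathbb{E}_{(X,Y)\sim\mathcal{D}}[\mathbb{1}(h(X)\neq Y)]$. The majority vote classifier is $h_{\mathrm{MV}}(x)=\arg\max_j \mathbb{E}_{h\sim\rho}[\mathbb{1}(h(x)=j)]$ (ties broken arbitrarily). The ensemble improvement rate is $\mathrm{EIR}=\big(\mathbb{E}_{h\sim\rho}[L(h)]-L(h_{\mathrm{MV}})\big)/\mathbb{E}_{h\sim\rho}[L(h)]$, defined when $\mathbb{E}_{h\sim\rho}[L(h)]\neq 0$. *)

From HB Require Import structures.
From mathcomp Require Import all_boot all_order all_algebra.
From mathcomp Require Import all_classical all_reals all_analysis.
Set Implicit Arguments. Unset Strict Implicit. Unset Printing Implicit Defensive.
Import Order.TTheory GRing.Theory Num.Theory.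
Local Open Scope classical_set_scope.
Local Open Scope ring_scope.
Local Open Scope ereal_scope.

(* Framing: (X,Y) ~ D is modelled by a probability space (Omega, P) with
   random elements X : Omega -> Xs (features) and Y : Omega -> 'I_K (labels).
   rho is a probability on a measurable parameter space Theta, and
   h : Theta -> Xs -> 'I_K maps a parameter to a classifier. *)

Definition err_rate (R : realType) (dO : measure_display) (Omega : measurableType dO)
  (P : probability Omega R) (Xs : Type) (K : nat) (X : Omega -> Xs) (Y : Omega -> 'I_K)
  (f : Xs -> 'I_K) : \bar R :=
  P [set w | f (X w) != Y w].

Definition Wrho (R : realType) (dT : measure_display) (Theta : measurableType dT)
  (rho : probability Theta R) (Xs : Type) (K : nat) (h : Theta -> Xs -> 'I_K)
  (x : Xs) (y : 'I_K) : \bar R :=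
  \int[rho]_th ((h th x != y)%:R)%:E.

Definition exp_err (R : realType) (dT dO : measure_display)
  (Theta : measurableType dT) (Omega : measurableType dO)
  (rho : probability Theta R) (P : probability Omega R)
  (Xs : Type) (K : nat) (h : Theta -> Xs -> 'I_K)
  (X : Omega -> Xs) (Y : Omega -> 'I_K) : \bar R :=
  \int[rho]_th err_rate P X Y (h th).

Definition majority_vote (R : realType) (dT : measure_display) (Theta : measurableType dT)
  (rho : probability Theta R) (Xs : Type) (K : nat) (h : Theta -> Xs -> 'I_K)
  (hmv : Xs -> 'I_K) : Prop :=
  forall (x : Xs) (j : 'I_K),
    rho [set th | h th x = j] <= rho [set th | h th x = hmv x].

Definition competent (R : realType) (dT dO : measure_display)
  (Theta : measurableType dT) (Omega : measurableType dO)
  (rho : probability Theta R) (P : probability Omega R)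
  (Xs : Type) (K : nat) (h : Theta -> Xs -> 'I_K)
  (X : Omega -> Xs) (Y : Omega -> 'I_K) : Prop :=
  forall t : R, (0 <= t)%R -> (t <= 2^-1)%R ->
    P [set w | (2^-1)%:E <= Wrho rho h (X w) (Y w) <= (1 - t)%:E]
    <= P [set w | t%:E <= Wrho rho h (X w) (Y w) < (2^-1)%:E].

Definition EIR (R : realType) (EL Lmv : \bar R) : R :=
  ((fine EL - fine Lmv) / fine EL)%R.

From HB Require Import structures.
From mathcomp Require Import all_boot all_order all_algebra.
From mathcomp Require Import all_classical all_reals all_analysis.
From mathcomp Require Import measurable_realfun lra.
Import Order.TTheory GRing.Theory Num.Theory.
Local Open Scope classical_set_scope.
Local Open Scope ring_scope.

(* Where the majority vote errs on (x, y), the true label y gets at most half of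
   the votes, so W := W_rho(X, Y) >= 1/2 there: L(h_MV) <= P(W >= 1/2).  By Fubini,
   E_rho[L(h)] = E[W].  Now
     E[W] = E[W 1{W < 1/2}] + E[W 1{W >= 1/2}],
     P(W >= 1/2) = E[(1 - W) 1{W >= 1/2}] + E[W 1{W >= 1/2}],
   and for t > 0 competence says precisely that the tail P(... >= t) of
   (1 - W) 1{W >= 1/2} is below that of W 1{W < 1/2}.  Tail domination between
   [0, 1]-valued variables orders their means, because the staircase
   approximation floor(N U) / N = (1/N) sum_k 1{U >= (k+1)/N} loses at most 1/N. *)

Section staircase.
Context {R : archiRealFieldType}.

Definition staircase (N : nat) (x : R) : R :=
  N%:R^-1 * \sum_(k < N) ((k.+1%:R / N%:R <= x)%R)%:R.

Lemma sumr_ord_ltn (N m : nat) : \sum_(k < N) (k < m)%:R = (minn N m)%:R :> R.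
Proof.
elim: N => [|N IH]; first by rewrite big_ord0 min0n.
rewrite big_ord_recr /= IH -natrD; congr _%:R.
case: ltnP => Nm.
  by rewrite addn1 (minn_idPl Nm).
by rewrite addn0 (minn_idPr (leqW Nm)).
Qed.

Lemma staircaseE N x : (0 < N)%N ->
  staircase N x = N%:R^-1 * (minn N (Num.truncn (x * N%:R)))%:R.
Proof.
move=> N_gt0; rewrite /staircase -sumr_ord_ltn; congr (_ * _).
apply: eq_bigr => k _; rewrite truncn_gt_nat ler_pdivrMr //.
by rewrite ltr0n.
Qed.

Lemma staircase_ge0 N x : 0 <= staircase N x.
Proof. by rewrite mulr_ge0 // sumr_ge0. Qed.

Lemma staircase_le N x : 0 <= x -> staircase N x <= x.
Proof.
move=> x_ge0; have [->|N_gt0] := posnP N; first by rewrite /staircase big_ord0 mulr0.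
have N_pos : 0 < N%:R :> R by rewrite ltr0n.
rewrite staircaseE // mulrC ler_pdivrMr //.
apply: (@le_trans _ _ (Num.truncn (x * N%:R))%:R); first by rewrite ler_nat geq_minr.
by rewrite truncn_le mulr_ge0 // ltW.
Qed.

Lemma staircase_ge N x : (0 < N)%N -> x <= 1 -> x - N%:R^-1 <= staircase N x.
Proof.
move=> N_gt0 x_le1; have N_pos : 0 < N%:R :> R by rewrite ltr0n.
rewrite staircaseE // mulrC ler_pdivlMr // mulrBl mulVf ?gt_eqF //.
case: leqP => _.
  by have := ler_wpM2r (ltW N_pos) x_le1; rewrite mul1r; lra.
by have := truncnS_gt (x * N%:R); rewrite -natr1; lra.
Qed.

End staircase.

Lemma measurable_ge_set {d} {T : measurableType d} {R : realType} (f : T -> R) (t : R) :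
  measurable_fun setT f -> measurable [set x | t <= f x].
Proof.
move=> mf; rewrite -[X in measurable X]setTI.
by apply: measurable_fun_le => //; exact: measurable_cst.
Qed.

Section staircase_integral.
Context {d} {T : measurableType d} {R : realType}.
Variables (f : T -> R) (mf : measurable_fun setT f) (N : nat).
Local Open Scope ereal_scope.

Let A (k : 'I_N) := [set x | (k.+1%:R / N%:R <= f x)%R].

Let staircase_indic x :
  (staircase N (f x))%:E = \sum_(k < N) (N%:R^-1)%:E * (\1_(A k) x : R)%:E.
Proof.
rewrite /staircase mulr_sumr -sumEFin.
by apply: eq_bigr => k _; rewrite indicE /A mem_setE EFinM.
Qed.

Let measurable_indic_A k :
  measurable_fun setT (fun x => (N%:R^-1)%:E * (\1_(A k) x : R)%:E).
Proof.
apply/measurable_funeM/measurable_EFinP.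
by apply: measurable_indic; exact: measurable_ge_set.
Qed.

Lemma measurable_staircase : measurable_fun setT (fun x => (staircase N (f x))%:E).
Proof.
under eq_fun do rewrite staircase_indic.
by apply: emeasurable_sum => k; exact: measurable_indic_A.
Qed.

Lemma integral_staircase (mu : {measure set T -> \bar R}) :
  \int[mu]_x (staircase N (f x))%:E =
  \sum_(k < N) (N%:R^-1)%:E * mu [set x | (k.+1%:R / N%:R <= f x)%R].
Proof.
under eq_integral do rewrite staircase_indic.
rewrite ge0_integral_sum //.
apply: eq_bigr => k _.
have mAk : measurable (A k) by exact: measurable_ge_set.
rewrite ge0_integralZl_EFin ?invr_ge0 //; last exact/measurable_EFinP/measurable_indic.
by rewrite (integral_indic mu measurableT mAk) setIT.
Qed.

End staircase_integral.

Section tails.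
Context {d} {T : measurableType d} {R : realType} (P : probability T R).
Local Open Scope ereal_scope.

Lemma le_integral_of_tails (f g : T -> R) :
  measurable_fun setT f -> measurable_fun setT g ->
  (forall x, 0 <= f x)%R -> (forall x, 0 <= g x)%R -> (forall x, g x <= 1)%R ->
  (forall t, (0 < t)%R -> P [set x | (t <= g x)%R] <= P [set x | (t <= f x)%R]) ->
  \int[P]_x (g x)%:E <= \int[P]_x (f x)%:E.
Proof.
move=> mf mg f_ge0 g_ge0 g_le1 tails; apply/lee_addgt0Pr => e e_gt0.
pose N := (Num.truncn e^-1).+1.
have N_le_e : (N%:R^-1 <= e)%R.
  rewrite -[e]invrK lef_pV2 ?posrE ?invr_gt0 ?ltr0n //; exact/ltW/truncnS_gt.
have stair_ge0 (u : T -> R) x : 0 <= (staircase N (u x))%:E.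
  by rewrite lee_fin staircase_ge0.
have stair_le : \int[P]_x (staircase N (g x))%:E <= \int[P]_x (staircase N (f x))%:E.
  rewrite !integral_staircase //; apply: lee_sum => k _.
  by apply: lee_wpmul2l; [rewrite lee_fin invr_ge0|apply: tails; rewrite divr_gt0 ?ltr0n].
apply: (@le_trans _ _ (\int[P]_x ((staircase N (g x))%:E + (N%:R^-1)%:E))).
  apply: ge0_le_integral => //.
  - by move=> x _; rewrite lee_fin.
  - exact/measurable_EFinP.
  - by apply: emeasurable_funD; [exact: measurable_staircase|exact: measurable_cst].
  - move=> x _; rewrite -EFinD lee_fin -lerBlDr.
    exact: staircase_ge.
rewrite ge0_integralD //; last exact: measurable_staircase.
have P_setT : (P : {measure set T -> \bar R}) setT = 1 by exact: probability_setT.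
rewrite integral_cst // P_setT mule1.
apply: leeD; last by rewrite lee_fin.
apply: le_trans stair_le _; apply: ge0_le_integral => //.
- exact: measurable_staircase.
- exact/measurable_EFinP.
- by move=> x _; rewrite lee_fin staircase_le.
Qed.

End tails.

Lemma ge0_integralD_EFin {d} {T : measurableType d} {R : realType}
    (mu : {measure set T -> \bar R}) (f g : T -> R) :
  measurable_fun setT f -> measurable_fun setT g ->
  (forall x, 0 <= f x) -> (forall x, 0 <= g x) ->
  (\int[mu]_x (f x + g x)%:E = \int[mu]_x (f x)%:E + \int[mu]_x (g x)%:E)%E.
Proof.
move=> mf mg f_ge0 g_ge0; under eq_integral do rewrite EFinD.
apply: ge0_integralD => //.
- by move=> x _; rewrite lee_fin.
- exact/measurable_EFinP.
- by move=> x _; rewrite lee_fin.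
- exact/measurable_EFinP.
Qed.

Section competence.
Context {d} {T : measurableType d} {R : realType} (P : probability T R).
Variables (W : T -> R) (mW : measurable_fun setT W).
Hypothesis W01 : forall x, 0 <= W x <= 1.
Hypothesis competent_W : forall t, 0 <= t -> t <= 2^-1 ->
  (P [set x | (2^-1 <= W x <= 1 - t)%R] <= P [set x | (t <= W x < 2^-1)%R])%E.
Local Open Scope ereal_scope.

Let S := [set x | (2^-1 <= W x)%R].
Let mS : measurable S. Proof. exact: measurable_ge_set. Qed.
Let inS x : (x \in S) = (2^-1 <= W x)%R.
Proof. by apply/idP/idP => [/set_mem|/mem_set]. Qed.

Let W_lo x := (W x * \1_(~` S) x)%R.
Let W_hi x := (W x * \1_S x)%R.
Let coW_hi x := ((1 - W x) * \1_S x)%R.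

Let W_ge0 x : (0 <= W x)%R. Proof. by case/andP: (W01 x). Qed.
Let W_lo_ge0 x : (0 <= W_lo x)%R. Proof. by rewrite mulr_ge0. Qed.
Let W_hi_ge0 x : (0 <= W_hi x)%R. Proof. by rewrite mulr_ge0. Qed.
Let coW_hi_ge0 x : (0 <= coW_hi x)%R.
Proof. by rewrite mulr_ge0 // subr_ge0; case/andP: (W01 x). Qed.

Let coW_hi_le1 x : (coW_hi x <= 1)%R.
Proof.
rewrite /coW_hi indicE; case: (x \in S); rewrite ?mulr1 ?mulr0 ?ler01 //.
by rewrite lerBlDr lerDl.
Qed.

Let measurable_W_lo : measurable_fun setT W_lo.
Proof. by apply: measurable_funM => //; apply/measurable_indic/measurableC. Qed.

Let measurable_W_hi : measurable_fun setT W_hi.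
Proof. by apply: measurable_funM => //; exact: measurable_indic. Qed.

Let measurable_coW_hi : measurable_fun setT coW_hi.
Proof.
apply: measurable_funM; last exact: measurable_indic.
by apply: measurable_funB => //; exact: measurable_cst.
Qed.

Let integral_W_split : \int[P]_x (W x)%:E = \int[P]_x (W_lo x)%:E + \int[P]_x (W_hi x)%:E.
Proof.
rewrite -ge0_integralD_EFin //; apply: eq_integral => x _.
rewrite /W_lo /W_hi !indicE in_setC.
by case: (x \in S); rewrite /= ?mulr1 ?mulr0 ?addr0 ?add0r.
Qed.

Let prob_S_split : P S = \int[P]_x (coW_hi x)%:E + \int[P]_x (W_hi x)%:E.
Proof.
have -> : P S = \int[P]_x (\1_S x)%:E by rewrite integral_indic // setIT.
rewrite -ge0_integralD_EFin //; apply: eq_integral => x _.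
by rewrite /coW_hi /W_hi -mulrDl subrK mul1r.
Qed.

Let tail_W_lo t : (0 < t)%R -> [set x | (t <= W_lo x)%R] = [set x | (t <= W x < 2^-1)%R].
Proof.
move=> t_gt0; apply: eq_set => x; rewrite /W_lo indicE in_setC inS.
by case: (lerP 2^-1 (W x)) => _ /=; rewrite ?mulr0 ?mulr1 ?leNgt ?t_gt0 ?andbT ?andbF.
Qed.

Let tail_coW_hi t : (0 < t)%R ->
  [set x | (t <= coW_hi x)%R] = [set x | (2^-1 <= W x <= 1 - t)%R].
Proof.
move=> t_gt0; apply: eq_set => x; rewrite /coW_hi indicE inS.
case: (lerP 2^-1 (W x)) => _ /=; last by rewrite mulr0 leNgt t_gt0.
by rewrite mulr1 !lerBrDr addrC.
Qed.

Let integral_coW_hi_le : \int[P]_x (coW_hi x)%:E <= \int[P]_x (W_lo x)%:E.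
Proof.
apply: le_integral_of_tails => // t t_gt0; rewrite tail_W_lo // tail_coW_hi //.
have [t_le|t_gt] := lerP t 2^-1; first exact: competent_W (ltW t_gt0) t_le.
rewrite (_ : [set x | _] = set0) ?measure0 //.
by apply/seteqP; split => // x /= /andP[]; lra.
Qed.

Lemma prob_ge_half_le_integral : P [set x | (2^-1 <= W x)%R] <= \int[P]_x (W x)%:E.
Proof. by rewrite prob_S_split integral_W_split leeD. Qed.

End competence.

Section ensemble.
Context {R : realType} {dT dO : measure_display} {Theta : measurableType dT}
  {Omega : measurableType dO} (rho : probability Theta R) (P : probability Omega R)
  {Xs : Type} {K : nat} {h : Theta -> Xs -> 'I_K}.
Local Open Scope ereal_scope.

Section votes.
Hypothesis mh : forall x j, measurable [set th | h th x = j].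

Lemma WrhoE x y : Wrho rho h x y = 1 - rho [set th | h th x = y].
Proof.
rewrite /Wrho -probability_setC // -[X in rho X]setIT -integral_indic //; last exact: measurableC.
apply: eq_integral => th _; rewrite indicE in_setC.
by congr (~~ _)%:R%:E; apply/eqP/idP => [/mem_set|/set_mem].
Qed.

Lemma Wrho_ge0_le1 x y : 0 <= Wrho rho h x y <= 1.
Proof.
have a_ge0 := fine_ge0 (measure_ge0 rho [set th | h th x = y]).
have := probability_le1 rho (mh x y).
rewrite WrhoE -(fineK (fin_num_measure _ _ (mh x y))) -EFinB !lee_fin => a_le1.
by apply/andP; split; lra.
Qed.

Lemma majority_vote_err_Wrho hmv : majority_vote rho h hmv ->
  forall x y, hmv x != y -> (2^-1)%:E <= Wrho rho h x y.
Proof.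
move=> mv x y hmv_neq; rewrite WrhoE.
have disj : [set th | h th x = y] `&` [set th | h th x = hmv x] = set0.
  by apply/seteqP; split => // th /= [-> hyx]; move/eqP: hmv_neq; apply.
have ab_le1 : rho [set th | h th x = y] + rho [set th | h th x = hmv x] <= 1.
  by rewrite -measureU //; apply: probability_le1; exact: measurableU.
have := mv x y; move: ab_le1.
rewrite -(fineK (fin_num_measure _ _ (mh x y))) -(fineK (fin_num_measure _ _ (mh x (hmv x)))).
rewrite -EFinD -EFinB !lee_fin; lra.
Qed.

End votes.

Section fubini.
Context {X : Omega -> Xs} {Y : Omega -> 'I_K}.
Let E := [set p : Theta * Omega | h p.1 (X p.2) != Y p.2].
Hypothesis mE : measurable E.

Let err p : \bar R := (\1_E p)%:E.

Let inE p : (p \in E) = (h p.1 (X p.2) != Y p.2).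
Proof. by apply/idP/idP => [/set_mem|/mem_set]. Qed.

Let measurable_err : measurable_fun setT err.
Proof. exact/measurable_EFinP/measurable_indic. Qed.

Let err_ge0 p : 0 <= err p.
Proof. by rewrite lee_fin. Qed.

Let Wrho_err w : Wrho rho h (X w) (Y w) = \int[rho]_th err (th, w).
Proof. by apply: eq_integral => th _; rewrite /err indicE inE. Qed.

Let err_rate_err th : err_rate P X Y (h th) = \int[P]_w err (th, w).
Proof.
have mEth : measurable [set w | h th (X w) != Y w].
  rewrite (_ : [set w | _] = xsection E th); first exact: measurable_xsection.
  by rewrite /xsection; apply: eq_set => w; rewrite inE.
by rewrite /err_rate -(setIT [set w | _]) -integral_indic.
Qed.

Lemma measurable_Wrho : measurable_fun setT (fun w => Wrho rho h (X w) (Y w)).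
Proof.
rewrite (_ : (fun w => _) = fubini_G rho err); last by apply/funext => w; exact: Wrho_err.
exact: measurable_fun_fubini_tonelli_G.
Qed.

Lemma exp_errE : exp_err rho P h X Y = \int[P]_w Wrho rho h (X w) (Y w).
Proof.
rewrite /exp_err; under eq_integral do rewrite err_rate_err.
rewrite (fubini_tonelli err) //.
by apply: eq_integral => w _; rewrite Wrho_err.
Qed.

End fubini.

End ensemble.

Local Open Scope ereal_scope.

(* No finiteness is needed: for EL = +oo, [fine EL = 0] and x / 0 = 0. *)
Lemma EIR_ge0 (R : realType) (EL Lmv : \bar R) :
  0 <= Lmv -> Lmv <= EL -> (0 <= EIR EL Lmv)%R.
Proof.
rewrite /EIR; case: Lmv EL => [l| |] [r| |] //=; rewrite ?lee_fin.
- by move=> l_ge0 l_le_r; rewrite divr_ge0 ?subr_ge0 // (le_trans l_ge0).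
- by rewrite invr0 mulr0.
Qed.

Theorem theorem1 (R : realType) (dT dO : measure_display)
  (Theta : measurableType dT) (Omega : measurableType dO)
  (rho : probability Theta R) (P : probability Omega R)
  (Xs : Type) (K : nat) (h : Theta -> Xs -> 'I_K)
  (X : Omega -> Xs) (Y : Omega -> 'I_K) (hmv : Xs -> 'I_K) :
  (2 <= K)%N ->
  (* measurability of the classifiers *)
  measurable [set p : Theta * Omega | h p.1 (X p.2) != Y p.2] ->
  (forall (x : Xs) (j : 'I_K), measurable [set th | h th x = j]) ->
  measurable [set w | hmv (X w) != Y w] ->
  majority_vote rho h hmv ->
  competent rho P h X Y ->
  exp_err rho P h X Y != 0 ->
  (0 <= EIR (exp_err rho P h X Y) (err_rate P X Y hmv))%R /\
  err_rate P X Y hmv <= exp_err rho P h X Y.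
Proof.
(* K >= 2 and E L != 0 only make EIR meaningful. *)
move=> _ mE mh mhmv mv competent_rho _.
pose W w := fine (Wrho rho h (X w) (Y w)).
have WE w : Wrho rho h (X w) (Y w) = (W w)%:E.
  case/andP: (Wrho_ge0_le1 rho mh (X w) (Y w)) => W_ge0 W_le1.
  by rewrite fineK // ge0_fin_numE // (le_lt_trans W_le1) ?ltry.
have mW : measurable_fun setT W.
  exact: measurableT_comp (fine_measurable measurableT) (measurable_Wrho rho mE).
have err_le_half : err_rate P X Y hmv <= P [set w | (2^-1 <= W w)%R].
  apply: le_measure; [exact: mem_set | exact/mem_set/measurable_ge_set |].
  by move=> w /= /(majority_vote_err_Wrho rho mh _ mv); rewrite WE lee_fin.
have err_le : err_rate P X Y hmv <= exp_err rho P h X Y.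
  rewrite exp_errE //; under eq_integral do rewrite WE.
  apply: (le_trans err_le_half); apply: prob_ge_half_le_integral => //.
  - by move=> w; rewrite -!lee_fin -WE; exact: Wrho_ge0_le1.
  - move=> t t_ge0 t_le.
    under eq_set do rewrite -!lee_fin -WE.
    under [in X in _ <= X]eq_set do rewrite -lee_fin -lte_fin -WE.
    exact: competent_rho.
by split => //; exact: EIR_ge0.
Qed.
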